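(* Let $G$ be a graph all of whose $\operatorname{IR}(G)$-sets are independent. If the $\operatorname{IR}$-graph $H=G(\operatorname{IR})$ is connected and has at least three vertices, then $H$ contains a triangle or an induced $C_4$.
   Context: All graphs are finite and simple. For $G=(V,E)$, $D\subseteq V$, $v\in D$: $\operatorname{PN}(v,D)=N[v]-N[D-\{v\}]$ (closed neighbourhoods). $D$ is irredundant if $\operatorname{PN}(v,D)\neq\varnothing$ for all $v\in D$; $\operatorname{IR}(G)$ is the maximum size of an irredundant set; an $\operatorname{IR}(G)$-set is an irredundant set of that size. $G(\operatorname{IR})$ has the $\operatorname{IR}(G)$-sets as vertices, with $D\sim D'$ iff there exist $u\in D$, $v\in D'$ with $uv\in E(G)$ and $D'=(D-\{u\})\cup\{v\}$. *)

(* A finite simple graph is a symmetric irreflexive relation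
   e on a finite type T. *)
From mathcomp Require Import all_boot.
Set Implicit Arguments. Unset Strict Implicit. Unset Printing Implicit Defensive.

Section IRGraph.
Variables (T : finType) (e : rel T).

Definition cnbhd (v : T) : {set T} := v |: [set w | e v w].
Definition cnbhdS (S : {set T}) : {set T} := \bigcup_(v in S) cnbhd v.
Definition pn (v : T) (D : {set T}) : {set T} := cnbhd v :\: cnbhdS (D :\ v).

Definition irredundant (D : {set T}) : bool := [forall v in D, pn v D != set0].

(* IR(G): maximum size of an irredundant set (set0 is irredundant) *)
Definition IRnum : nat := \max_(D : {set T} | irredundant D) #|D|.

Definition IRset (D : {set T}) : bool := irredundant D && (#|D| == IRnum).

Definition independent (D : {set T}) : bool :=
  [forall u in D, forall v in D, ~~ e u v].

Definition IRadj (D D' : {set T}) : bool :=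
  [&& IRset D, IRset D' &
   [exists u in D, exists v in D', e u v && (D' == (D :\ u) :|: [set v])]].

Definition IRgraph_connected : Prop :=
  forall D D', IRset D -> IRset D' -> connect IRadj D D'.

Definition IRgraph_order : nat := #|[set D : {set T} | IRset D]|.

Definition IRgraph_has_triangle : Prop :=
  exists D1 D2 D3 : {set T},
    [/\ D1 != D2, D2 != D3, D1 != D3 &
        [/\ IRadj D1 D2, IRadj D2 D3 & IRadj D1 D3]].

Definition IRgraph_has_induced_C4 : Prop :=
  exists D1 D2 D3 D4 : {set T},
    [/\ uniq [:: D1; D2; D3; D4],
        [/\ IRadj D1 D2, IRadj D2 D3, IRadj D3 D4 & IRadj D4 D1] &
        ~~ IRadj D1 D3 /\ ~~ IRadj D2 D4].

End IRGraph.

(* Because IR-sets are independent and of maximum size, two IR-sets that differ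
   by a single exchange u -> x are always adjacent: if u and x were not adjacent,
   x |: D would be a larger independent, hence irredundant, set.
   Connectedness and three vertices give a path D1 ~ D2 ~ D3 with D1 != D3.
   If the second exchange removes the vertex v brought in by the first, then D3
   is a single exchange away from D1 and D1 D2 D3 is a triangle.  Otherwise
   D2 = D1 - u + v and D3 = D2 - w + x with u, w in D1, and D4 = D1 - w + x is
   again an IR-set (v, w and the vertices themselves serve as private
   neighbours), so D1 D2 D3 D4 is a 4-cycle; it is induced because D1, D3 and
   D2, D4 differ in two vertices. *)

From mathcomp Require Import all_boot.
Set Implicit Arguments. Unset Strict Implicit. Unset Printing Implicit Defensive.

Section Exchange.
Variable T : finType.
Implicit Types (D : {set T}) (a b c d : T).

Lemma card_swap D a b : a \in D -> #|D :\ a :|: [set b]| + (b \in D :\ a) = #|D|.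
Proof.
move=> aD; rewrite setUC cardsU1 (cardsD1 a D) aD.
by case: (b \in D :\ a); rewrite ?addn0 addnC.
Qed.

Lemma swapK D a b : a \in D -> b \notin D -> (D :\ a :|: [set b]) :\ b :|: [set a] = D.
Proof.
move=> aD bD; apply/setP => z; rewrite !inE.
have [-> | za] := eqVneq z a; first by rewrite aD orbT.
by have [-> | zb] := eqVneq z b; rewrite ?(negbTE bD) ?orbF.
Qed.

Lemma swap_trans D a b c :
  b \notin D -> (D :\ a :|: [set b]) :\ b :|: [set c] = D :\ a :|: [set c].
Proof.
move=> bD; apply/setP => z; rewrite !inE.
by have [-> | zb] := eqVneq z b; rewrite ?(negbTE bD) ?andbF ?orbF.
Qed.

Lemma swapC D a b c d : a != d -> b != c -> b != d ->
  (D :\ a :|: [set b]) :\ c :|: [set d] = (D :\ c :|: [set d]) :\ a :|: [set b].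
Proof.
move=> ad bc bd; apply/setP => z; rewrite !inE.
have [-> | zb] := eqVneq z b; first by rewrite bc !orbT.
have [-> | zd] := eqVneq z d; first by rewrite (eq_sym d a) ad !orbT.
by rewrite !orbF andbCA.
Qed.

End Exchange.

Lemma connect_path3 (S : finType) (r : rel S) X Y :
  connect r X Y -> X != Y -> ~~ r X Y -> exists Z W, [/\ r X Z, r Z W & X != W].
Proof.
case/connectP => p /shortenP[[|Z [|W q]] /= pathq uniqq _ ->]; first by rewrite eqxx.
  by rewrite andbT in pathq; rewrite pathq.
case/and3P: pathq => rXZ rZW _; case/andP: uniqq => XZWq _ _ _.
by exists Z, W; split=> //; apply: contraNneq XZWq => <-; rewrite !inE eqxx orbT.
Qed.

Section IRgraph.
Variables (T : finType) (e : rel T).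
Implicit Types (D : {set T}) (a b u v w x y z : T).

Lemma independentP D : reflect {in D &, forall a b, ~~ e a b} (independent e D).
Proof.
apply: (iffP forall_inP) => [indD a b aD bD | indD a aD].
- by have /forall_inP := indD a aD; apply.
- by apply/forall_inP => b; apply: indD.
Qed.

Lemma independent_notin_cnbhd D a y :
  independent e D -> a \in D -> y \in D -> a != y -> a \notin cnbhd e y.
Proof. by move=> /independentP indD aD yD ay; rewrite !inE negb_or ay indD. Qed.

Lemma pn_neq0 D z a :
  a \in cnbhd e z -> {in D :\ z, forall y, a \notin cnbhd e y} -> pn e z D != set0.
Proof.
move=> az aD; apply/set0Pn; exists a; rewrite inE az andbT.
by apply/bigcupP => -[y /aD/negP].
Qed.

Lemma irredundant_leq_IRnum D : irredundant e D -> #|D| <= IRnum e.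
Proof. exact: leq_bigmax_cond. Qed.

Lemma IRset_card D : IRset e D -> #|D| = IRnum e.
Proof. by case/andP=> _ /eqP. Qed.

Lemma IRadj_setD_uniq D D' : IRadj e D D' -> {in D :\: D' &, forall a b, a = b}.
Proof.
case/and3P=> _ _ /exists_inP[u _ /exists_inP[v _ /andP[_ /eqP->]]].
suff outE a : a \in D :\: (D :\ u :|: [set v]) -> a = u by move=> a b /outE-> /outE->.
by rewrite !inE negb_or => /andP[/andP[+ _] aD]; rewrite aD andbT negbK => /eqP.
Qed.

Lemma independent_irredundant D : independent e D -> irredundant e D.
Proof.
move=> indD; apply/forall_inP => z zD; apply: (pn_neq0 (a := z)).
  by rewrite !inE eqxx.
by move=> y /setD1P[yz yD]; apply: (independent_notin_cnbhd indD); rewrite // eq_sym.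
Qed.

Lemma IRadj_swap D u v :
  IRset e D -> IRset e (D :\ u :|: [set v]) -> u \in D -> e u v ->
  IRadj e D (D :\ u :|: [set v]).
Proof.
move=> ID ID' uD euv; rewrite /IRadj ID ID'; apply/exists_inP; exists u => //.
by apply/exists_inP; exists v; rewrite ?euv ?eqxx // !inE eqxx orbT.
Qed.

Hypothesis e_irr : irreflexive e.

Lemma IRadjP D D' : IRadj e D D' ->
  [/\ IRset e D, IRset e D' & exists u v,
     [/\ u \in D, v \notin D, e u v & D' = D :\ u :|: [set v]]].
Proof.
case/and3P=> ID ID' /exists_inP[u uD /exists_inP[v _ /andP[euv /eqP D'E]]].
split=> //; exists u, v; split=> //.
have := card_swap v uD; rewrite -D'E !IRset_card // -[RHS]addn0 => /addnI.
have [vu | vu] := eqVneq v u; first by rewrite vu e_irr in euv.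
by rewrite !inE vu; case: (v \in D).
Qed.

Lemma IRadj_neq D D' : IRadj e D D' -> D != D'.
Proof.
case/IRadjP=> _ _ [u [v [uD _ euv ->]]]; apply/eqP => /setP/(_ u).
by rewrite !inE eqxx uD; case: eqVneq euv => // ->; rewrite e_irr.
Qed.

Hypothesis e_sym : symmetric e.

Lemma IRadj_sym D D' : IRadj e D D' -> IRadj e D' D.
Proof.
case/IRadjP=> ID ID' [u [v [uD vD euv D'E]]].
rewrite -(swapK uD vD) -D'E in ID *; apply: IRadj_swap => //; last by rewrite e_sym.
by rewrite D'E !inE eqxx orbT.
Qed.

Hypothesis IRset_independent : forall D, IRset e D -> independent e D.

Lemma IRset_exchange_edge D u x :
  IRset e D -> independent e (D :\ u :|: [set x]) -> x \notin D -> e u x.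
Proof.
move=> ID /independentP indD' xD; apply/negPn/negP => nux.
have nxD b : b \in D -> ~~ e x b.
  move=> bD; have [-> | bu] := eqVneq b u; first by rewrite e_sym.
  by apply: indD'; rewrite !inE ?eqxx ?bu ?bD ?orbT.
have indxD : independent e (x |: D).
  apply/independentP => a b /setU1P[-> | aD] /setU1P[-> | bD].
  - by rewrite e_irr.
  - exact: nxD.
  - by rewrite e_sym nxD.
  - by have /independentP := IRset_independent ID; apply.
have := irredundant_leq_IRnum (independent_irredundant indxD).
by rewrite cardsU1 xD IRset_card // ltnn.
Qed.

Lemma IRset_swap_IRadj D u x :
  IRset e D -> IRset e (D :\ u :|: [set x]) -> u \in D -> x \notin D ->
  IRadj e D (D :\ u :|: [set x]).
Proof.
move=> ID ID' uD xD; apply: IRadj_swap => //.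
exact: IRset_exchange_edge (IRset_independent ID') xD.
Qed.

Lemma IRset_square_corner D u v w x :
  IRset e D -> IRset e (D :\ u :|: [set v]) ->
  IRset e ((D :\ u :|: [set v]) :\ w :|: [set x]) ->
  u \in D -> w \in D -> v \notin D -> x \notin D -> v != x ->
  e u v -> e w x -> IRset e (D :\ w :|: [set x]).
Proof.
move=> ID1 ID2 ID3 uD wD vD xD vx euv ewx.
have ind1 := IRset_independent ID1; have ind2 := IRset_independent ID2.
have ind3 := IRset_independent ID3.
have vw : v != w by apply: contraNneq vD => ->.
apply/andP; split; last first.
  by rewrite -(IRset_card ID1) -(card_swap x wD) in_setD1 (negbTE xD) andbF addn0.
apply/forall_inP => z /setUP[/setD1P[zw zD] | /set1P->].
- have [-> | zu] := eqVneq z u.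
  + apply: (pn_neq0 (a := v)); first by rewrite !inE euv orbT.
    move=> y /setD1P[yu /setUP[/setD1P[yw yD] | /set1P->]].
    * apply: (independent_notin_cnbhd ind2); rewrite ?inE ?eqxx ?orbT ?yu ?yD //.
      by apply: contraNneq vD => ->.
    * by apply: (independent_notin_cnbhd ind3); rewrite ?inE ?eqxx ?orbT ?vw ?vx.
  + apply: (pn_neq0 (a := z)); first by rewrite !inE eqxx.
    move=> y /setD1P[yz /setUP[/setD1P[yw yD] | /set1P->]].
    * by apply: (independent_notin_cnbhd ind1); rewrite // eq_sym.
    * apply: (independent_notin_cnbhd ind3); rewrite ?inE ?eqxx ?orbT ?zw ?zu ?zD //.
      by apply: contraNneq xD => <-.
- apply: (pn_neq0 (a := w)); first by rewrite !inE e_sym ewx orbT.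
  move=> y /setD1P[yx /setUP[/setD1P[yw yD] | /set1P yx']].
  + by apply: (independent_notin_cnbhd ind1); rewrite // eq_sym.
  + by rewrite yx' eqxx in yx.
Qed.

Lemma IRset_square_C4 D u v w x :
  IRset e D -> IRset e (D :\ u :|: [set v]) ->
  IRset e ((D :\ u :|: [set v]) :\ w :|: [set x]) ->
  u \in D -> w \in D -> w != u -> v \notin D -> x \notin D -> v != x ->
  e u v -> e w x -> IRgraph_has_induced_C4 e.
Proof.
move=> ID1 ID2 ID3 uD wD wu vD xD vx euv ewx.
have ID4 := IRset_square_corner ID1 ID2 ID3 uD wD vD xD vx euv ewx.
set D2 := D :\ u :|: [set v] in ID2 ID3 *.
set D3 := D2 :\ w :|: [set x] in ID3 *.
set D4 := D :\ w :|: [set x] in ID4 *.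
have uv : u != v by apply: contraTneq euv => ->; rewrite e_irr.
have wx : w != x by apply: contraTneq ewx => ->; rewrite e_irr.
have wv : w != v by apply: contraTneq wD => ->.
have ux : u != x by apply: contraNneq xD => <-.
have D3E : D3 = D4 :\ u :|: [set v] by rewrite /D3 /D2 /D4 swapC // eq_sym.
have vD2 : v \in D2 by rewrite !inE eqxx orbT.
have wD2 : w \in D2 by rewrite !inE wu wD.
have uD4 : u \in D4 by rewrite !inE (eq_sym u w) wu uD.
have vD4 : v \notin D4 by rewrite !inE (negbTE vD) andbF (negbTE vx).
have wD4 : w \notin D4 by rewrite !inE eqxx (negbTE wx).
have uD3 : u \notin D3 by rewrite D3E !inE eqxx (negbTE uv).
have wD3 : w \notin D3 by rewrite D3E in_setU in_setD1 (negbTE wD4) andbF in_set1.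
have A12 : IRadj e D D2 := IRadj_swap ID1 ID2 uD euv.
have A23 : IRadj e D2 D3 := IRadj_swap ID2 ID3 wD2 ewx.
have A14 : IRadj e D D4 := IRset_swap_IRadj ID1 ID4 wD xD.
have A43 : IRadj e D4 D3.
  by rewrite D3E; apply: IRset_swap_IRadj; rewrite -?D3E.
exists D, D2, D3, D4; split.
- have n13 : D != D3 by apply: contraNneq uD3 => <-.
  have n24 : D2 != D4 by apply: contraNneq vD4 => <-.
  rewrite /= !inE !negb_or n13 n24 (IRadj_neq A12) (IRadj_neq A14) (IRadj_neq A23).
  by rewrite eq_sym (IRadj_neq A43).
- by split=> //; apply: IRadj_sym.
- split; apply/negP => /IRadj_setD_uniq eq_out.
  + by move/eqP: wu; apply; apply: eq_out; rewrite inE ?wD ?uD ?wD3 ?uD3.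
  + by move/eqP: wv; apply; apply: eq_out; rewrite inE ?wD2 ?vD2 ?wD4 ?vD4.
Qed.

Lemma IRadj2_triangle_or_C4 D1 D2 D3 :
  IRadj e D1 D2 -> IRadj e D2 D3 -> D1 != D3 ->
  IRgraph_has_triangle e \/ IRgraph_has_induced_C4 e.
Proof.
move=> A12 A23 n13.
case/IRadjP: (A12) => I1 I2 [u [v [uD1 vD1 euv D2E]]].
case/IRadjP: (A23) => _ I3 [w [x [wD2 xD2 ewx D3E]]].
have vx : v != x by apply: contraNneq xD2 => <-; rewrite D2E !inE eqxx orbT.
have xD1 (xu : x != u) : x \notin D1.
  by apply: contra xD2 => xD1; rewrite D2E !inE xu xD1.
have [wv | wv] := eqVneq w v.
- have xu : x != u.
    by apply: contraNneq n13 => xu; rewrite D3E D2E wv xu swapK.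
  have D3E' : D3 = D1 :\ u :|: [set x] by rewrite D3E D2E wv swap_trans.
  left; exists D1, D2, D3; split; [exact: IRadj_neq A12 | exact: IRadj_neq A23 | by [] |].
  split=> //; rewrite D3E' in I3 *.
  exact: IRset_swap_IRadj I1 I3 uD1 (xD1 xu).
- move: (wD2); rewrite D2E !inE (negbTE wv) orbF => /andP[wu wD1].
  have xu : x != u.
    have /independentP ind3 := IRset_independent I3.
    apply: contraTneq euv => xu; rewrite -xu.
    by apply: ind3; rewrite D3E D2E !inE ?eqxx ?orbT ?(eq_sym v w) ?wv.
  rewrite D3E D2E in I3; rewrite D2E in I2; right.
  exact: IRset_square_C4 I1 I2 I3 uD1 wD1 wu vD1 (xD1 xu) vx euv ewx.
Qed.

End IRgraph.

Theorem lemma4p5 (T : finType) (e : rel T)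
  (e_sym : symmetric e) (e_irr : irreflexive e)
  (Hind : forall D : {set T}, IRset e D -> independent e D)
  (Hconn : IRgraph_connected e)
  (H3 : 3 <= IRgraph_order e) :
  IRgraph_has_triangle e \/ IRgraph_has_induced_C4 e.
Proof.
have nonadjacent X Y : IRset e X -> IRset e Y -> X != Y -> ~~ IRadj e X Y ->
    IRgraph_has_triangle e \/ IRgraph_has_induced_C4 e.
  move=> IX IY nXY aXY.
  have [Z [W [aXZ aZW nXW]]] := connect_path3 (Hconn X Y IX IY) nXY aXY.
  exact: (IRadj2_triangle_or_C4 e_irr e_sym Hind aXZ aZW nXW).
case/card_gt2P: H3 => [A [B [C [[IA IB IC] [nAB nBC nCA]]]]].
rewrite !inE in IA IB IC.
have [aAB | ] := boolP (IRadj e A B); last exact: nonadjacent.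
have [aBC | ] := boolP (IRadj e B C); last exact: nonadjacent.
have [aAC | ] := boolP (IRadj e A C); last by apply: nonadjacent; rewrite // eq_sym.
by left; exists A, B, C; split; rewrite // eq_sym.
Qed.
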